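(* Let $(T_1,\dots,T_k)$ be a tuple of contractions on a Hilbert space $\mathcal{H}$ and $q_{ij}\in\mathbb{T}$ ($1\le i<j\le k$) such that $T_iT_j=q_{ij}T_jT_i$ and $T_iT_j^*=\overline{q_{ij}}\,T_j^*T_i$ for $1\le i<j\le k$. Let $G_{dc}$ be the group described in the context and define $T:G_{dc}\to\mathcal{B}(\mathcal{H})$ by \[ T\Big(\prod_{1\le i<j\le k}q_{ij}^{m_{ij}}s_1^{m_1}\cdots s_k^{m_k}\Big)=\prod_{1\le i<j\le k}q_{ij}^{m_{ij}}\,T_1(m_1)\cdots T_k(m_k), \] where on the right $q_{ij}^{m_{ij}}$ denotes the power of the scalar $q_{ij}$. Then $T$ is positive definite if and only if \[ S(u)=\sum_{v\subseteq u}(-1)^{|v|}T(x^{e(v)})^*T(x^{e(v)})\ge 0 \] for every subset $u$ of $\{1,\dots,k\}$.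
   Context: For a contraction $C$ and $m\in\mathbb{Z}$: $C(m)=C^m$ if $m\ge1$, $C(0)=I$, and $C(m)=(C^* )^{|m|}$ if $m<0$. The group $G_{dc}$ consists of formal elements $x^m=\prod_{1\le i<j\le k}q_{ij}^{m_{ij}}s_1^{m_1}\cdots s_k^{m_k}$ indexed by $m=(m_{ij}\,(1\le i<j\le k);\,m_1,\dots,m_k)$ with all entries in $\mathbb{Z}$, where $s_1,\dots,s_k$ and $q_{ij}$ are indeterminates subject to $s_is_j=q_{ij}s_js_i$, $s_is_j^{-1}=q_{ij}^{-1}s_j^{-1}s_i$ ($i<j$), with the $q_{ij}$ central; concretely the product is $x^mx^n=\prod_{1\le i<j\le k}q_{ij}^{-n_im_j}\,x^{m+n}$ (i.e. the $q_{ij}$-exponents add and are corrected by $-n_im_j$, the $s_l$-exponents add), the identity is $x^0$ and $(x^m)^{-1}=\prod_{i<j}q_{ij}^{-m_im_j}x^{-m}$. For $v\subseteq\{1,\dots,k\}$, $x^{e(v)}=s_1^{e_1}\cdots s_k^{e_k}$ with $e_l=1$ if $l\in v$ and $0$ otherwise (all $q_{ij}$-exponents zero); thus $T(x^{e(v)})$ is the product of the $T_l$, $l\in v$, in increasing order of $l$. A function $T:G\to\mathcal{B}(\mathcal{H})$ on a group $G$ is positive definite if $T(s^{-1})=T(s)^*$ for all $s\in G$ and $\sum_{s,t\in G}\langle T(t^{-1}s)h(s),h(t)\rangle\ge0$ for every finitely supported $h:G\to\mathcal{H}$. *)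

From mathcomp Require Import all_boot all_order all_algebra.
From mathcomp Require Import reals complex.
Set Implicit Arguments. Unset Strict Implicit. Unset Printing Implicit Defensive.
Import Order.TTheory GRing.Theory Num.Theory.
Local Open Scope ring_scope.

Record is_hilbert (R : realType) (H : lmodType R[i]) (ip : H -> H -> R[i]) : Prop := {
  ip_linear : forall (a : R[i]) (x y z : H), ip (a *: x + y) z = a * ip x z + ip y z;
  ip_conj : forall x y : H, ip y x = (ip x y)^*;
  ip_ge0 : forall x : H, 0 <= ip x x;
  ip_eq0 : forall x : H, ip x x = 0 -> x = 0;
  ip_complete : forall u : nat -> H,
    (forall eps : R[i], 0 < eps -> exists N : nat, forall m n : nat,
        (N <= m)%N -> (N <= n)%N -> ip (u m - u n) (u m - u n) < eps) ->
    exists l : H, forall eps : R[i], 0 < eps -> exists N : nat, forall n : nat,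
        (N <= n)%N -> ip (u n - l) (u n - l) < eps }.

Definition is_linear_op (R : realType) (H : lmodType R[i]) (A : H -> H) : Prop :=
  forall (a : R[i]) (x y : H), A (a *: x + y) = a *: A x + A y.

Definition is_adjoint (R : realType) (H : lmodType R[i]) (ip : H -> H -> R[i])
  (A B : H -> H) : Prop := forall x y : H, ip (A x) y = ip x (B y).

Definition is_contraction (R : realType) (H : lmodType R[i]) (ip : H -> H -> R[i])
  (A : H -> H) : Prop := forall x : H, ip (A x) (A x) <= ip x x.

(* C(m) : C^m for m >= 0 (C^0 = I), (C^* )^{|m|} for m < 0; Negz n = -(n+1). *)
Definition opow (R : realType) (H : lmodType R[i]) (A Aadj : H -> H) (m : int) : H -> H :=
  match m with
  | Posz n => iter n A
  | Negz n => iter n.+1 Aadj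
  end.

Definition ltpair (k : nat) := {p : 'I_k * 'I_k | (p.1 < p.2)%N}.

(* x^m with m = (m_ij (i<j); m_1, ..., m_k) *)
Definition Gdc (k : nat) := ({ffun ltpair k -> int} * {ffun 'I_k -> int})%type.

(* x^m x^n = prod q_ij^{-n_i m_j} x^{m+n} *)
Definition gmul (k : nat) (x y : Gdc k) : Gdc k :=
  ([ffun p : ltpair k => x.1 p + y.1 p - y.2 (sval p).1 * x.2 (sval p).2],
   [ffun l => x.2 l + y.2 l]).

(* (x^m)^{-1} = prod q_ij^{-m_i m_j} x^{-m} *)
Definition ginv (k : nat) (x : Gdc k) : Gdc k :=
  ([ffun p : ltpair k => - x.1 p - x.2 (sval p).1 * x.2 (sval p).2],
   [ffun l => - x.2 l]).

(* x^{e(v)} = s_1^{e_1} ... s_k^{e_k} *)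
Definition xe (k : nat) (v : {set 'I_k}) : Gdc k :=
  ([ffun _ => 0], [ffun l => ((l \in v) : nat)%:Z]).

Definition Tdc (R : realType) (H : lmodType R[i]) (k : nat)
  (q : 'I_k -> 'I_k -> R[i]) (A Aadj : 'I_k -> H -> H) (g : Gdc k) : H -> H :=
  fun h => (\prod_(p : ltpair k) q (sval p).1 (sval p).2 ^ g.1 p) *:
    foldr (fun l f => opow (A l) (Aadj l) (g.2 l) \o f) id (enum 'I_k) h.

(* Positive definiteness of a function F : G_dc -> B(H): F(s^{-1}) = F(s)^*
   and sum_{s,t} <F(t^{-1}s) h(s), h(t)> >= 0 for finitely supported h
   (support contained in the duplicate-free list S). *)
Definition posdef_Gdc (R : realType) (H : lmodType R[i]) (ip : H -> H -> R[i])
  (k : nat) (F : Gdc k -> H -> H) : Prop :=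
  (forall s : Gdc k, is_adjoint ip (F s) (F (ginv s))) /\
  (forall (S : seq (Gdc k)) (h : Gdc k -> H), uniq S ->
     0 <= \sum_(s <- S) \sum_(t <- S) ip (F (gmul (ginv t) s) (h s)) (h t)).

(* Up to the unimodular scalar carried by the q-part, T((x^n)^-1 x^m) is a phase
   times T_1(m_1 - n_1) ... T_k(m_k - n_k), so positive definiteness of T is the
   positivity of a phase-twisted operator kernel on Z^k.  For 0 <= j <= k consider
   the hybrid kernels whose first j coordinates still carry integer exponents while
   the remaining ones are replaced by the Brehmer defect S(u) of a set u of these
   remaining indices.  Since T_j^* T_j commutes with every T_l, l <> j (the
   q-phases cancel), positivity of these kernels does not depend on j: the
   telescoping identity
     C(a - b) = sum_(r <= min(a,b)) C^*^(b-r) (I - C^* C) C^(a-r) + C^*^(b+1) C^(a+1)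
   writes a kernel of level j+1 as a sum of kernels of level j, and conversely
   testing a kernel of level j+1 with exponents 0 and 1 in coordinate j brings out
   the factor I - T_j^* T_j.  At level k this is positive definiteness of T, at
   level 0 it is the Brehmer condition <S(u) x, x> >= 0. *)

From mathcomp Require Import all_boot all_order all_algebra.
From mathcomp Require Import reals complex.
From mathcomp Require Import zify ring.
Import Order.TTheory GRing.Theory Num.Theory.
Local Open Scope ring_scope.
Set Implicit Arguments. Unset Strict Implicit. Unset Printing Implicit Defensive.

Lemma sum_subsetU1 (T : finType) (V : nmodType) (a : T) (u : {set T}) (F : {set T} -> V) :
    a \notin u ->
  \sum_(v : {set T} | v \subset a |: u) F v =
  \sum_(v : {set T} | v \subset u) F v + \sum_(v : {set T} | v \subset u) F (a |: v).
Proof.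
move=> au; have subU1 (v : {set T}) : (v \subset a |: u) && (a \notin v) = (v \subset u).
  by rewrite -subsetD1 setU1K.
rewrite (bigID (fun v : {set T} => a \in v)) /= addrC; congr (_ + _).
  by apply: eq_bigl => v; rewrite subU1.
rewrite (reindex_onto (fun v => a |: v) (fun v => v :\ a)) /=; last first.
  by move=> v /andP[_ av]; exact: setD1K.
apply: eq_bigl => v; rewrite setU11 andbT.
case: (boolP (a \in v)) => av.
  have /negbTE-> : (a |: v) :\ a != v by apply: contraTneq av => <-; rewrite setD11.
  by rewrite andbF; apply/esym/(contraNF _ au) => /subsetP; apply.
by rewrite setU1K // eqxx andbT subUset sub1set setU11 -subU1 av andbT.
Qed.

Lemma sum_fibers (I T : eqType) (V : nmodType) (f : I -> T) (S : seq I) (F : I -> V) :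
  \sum_(a <- undup [seq f s | s <- S]) \sum_(s <- S | f s == a) F s = \sum_(s <- S) F s.
Proof.
rewrite (exchange_big_dep xpredT) //= !big_seq; apply: eq_bigr => s sS.
rewrite big_mkcond (bigD1_seq (f s)) ?undup_uniq ?mem_undup ?map_f //= eqxx.
by rewrite big1 ?addr0 // => a /negbTE; rewrite eq_sym => ->.
Qed.

Section InnerProductSpace.
Variables (R : realType) (H : lmodType R[i]) (ip : H -> H -> R[i]).
Hypothesis ipH : is_hilbert ip.

Lemma ip0l z : ip 0 z = 0.
Proof. by have := ip_linear ipH (-1) 0 0 z; rewrite scaler0 addr0 mulN1r addNr. Qed.

Lemma ipDl x y z : ip (x + y) z = ip x z + ip y z.
Proof. by have := ip_linear ipH 1 x y z; rewrite scale1r mul1r. Qed.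

Lemma ipZl a x z : ip (a *: x) z = a * ip x z.
Proof. by have := ip_linear ipH a x 0 z; rewrite !addr0 ip0l addr0. Qed.

Lemma ipNl x z : ip (- x) z = - ip x z.
Proof. by rewrite -scaleN1r ipZl mulN1r. Qed.

Lemma ipBl x y z : ip (x - y) z = ip x z - ip y z.
Proof. by rewrite ipDl ipNl. Qed.

Lemma ip_suml (I : Type) (r : seq I) (P : pred I) (F : I -> H) z :
  ip (\sum_(i <- r | P i) F i) z = \sum_(i <- r | P i) ip (F i) z.
Proof. exact: (big_morph (ip^~ z) (fun x y => ipDl x y z) (ip0l z)). Qed.

Lemma ip0r z : ip z 0 = 0.
Proof. by rewrite (ip_conj ipH) ip0l conjC0. Qed.

Lemma ipDr x y z : ip z (x + y) = ip z x + ip z y.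
Proof. by rewrite !(ip_conj ipH _ z) ipDl rmorphD. Qed.

Lemma ipZr a x z : ip z (a *: x) = a^* * ip z x.
Proof. by rewrite !(ip_conj ipH _ z) ipZl rmorphM. Qed.

Lemma ipNr x z : ip z (- x) = - ip z x.
Proof. by rewrite -scaleN1r ipZr rmorphN1 mulN1r. Qed.

Lemma ip_sumr (I : Type) (r : seq I) (P : pred I) (F : I -> H) z :
  ip z (\sum_(i <- r | P i) F i) = \sum_(i <- r | P i) ip z (F i).
Proof. exact: (big_morph (ip z) (fun x y => ipDr x y z) (ip0r z)). Qed.

Lemma ip_injl x y : (forall z, ip x z = ip y z) -> x = y.
Proof. by move=> xy; apply/subr0_eq/(ip_eq0 ipH); rewrite ipBl xy subrr. Qed.

Lemma ip_injr x y : (forall z, ip z x = ip z y) -> x = y.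
Proof. by move=> xy; apply: ip_injl => z; rewrite (ip_conj ipH) xy -(ip_conj ipH). Qed.

Section LinearOperator.
Variables (f : H -> H) (lf : is_linear_op f).

Lemma linopD x y : f (x + y) = f x + f y.
Proof. by have := lf 1 x y; rewrite !scale1r. Qed.

Lemma linop0 : f 0 = 0.
Proof. by apply: (addrI (f 0)); rewrite -linopD !addr0. Qed.

Lemma linopZ a x : f (a *: x) = a *: f x.
Proof. by rewrite -[a *: x]addr0 lf linop0 addr0. Qed.

Lemma linopN x : f (- x) = - f x.
Proof. by rewrite -scaleN1r linopZ scaleN1r. Qed.

Lemma linopB x y : f (x - y) = f x - f y.
Proof. by rewrite linopD linopN. Qed.

Lemma linop_sum (I : Type) (r : seq I) (P : pred I) (F : I -> H) :
  f (\sum_(i <- r | P i) F i) = \sum_(i <- r | P i) f (F i).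
Proof. exact: (big_morph f linopD linop0). Qed.

Lemma linop_iter n : is_linear_op (iter n f).
Proof. by elim: n => [//|n IHn] a x y /=; rewrite IHn lf. Qed.

End LinearOperator.

Lemma linop_comp (f g : H -> H) : is_linear_op f -> is_linear_op g -> is_linear_op (f \o g).
Proof. by move=> lf lg a x y /=; rewrite lg lf. Qed.

Lemma iter_commute (f g : H -> H) (c : R[i]) :
    is_linear_op f -> is_linear_op g -> (forall x, f (g x) = c *: g (f x)) ->
  forall n m x, iter n f (iter m g x) = c ^+ (n * m) *: iter m g (iter n f x).
Proof.
move=> lf lg fg.
have f_iter m x : f (iter m g x) = c ^+ m *: iter m g (f x).
  elim: m x => [|m IHm] x /=; first by rewrite scale1r.
  by rewrite fg IHm (linopZ lg) scalerA exprS.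
elim=> [|n IHn] m x /=; first by rewrite mul0n scale1r.
by rewrite IHn (linopZ lf) f_iter scalerA -exprD mulSn addnC.
Qed.

Lemma adjoint_iter (f g : H -> H) n :
  is_adjoint ip f g -> is_adjoint ip (iter n f) (iter n g).
Proof. by move=> fg; elim: n => [//|n IHn] x y /=; rewrite fg IHn -iterSr. Qed.

Lemma adjoint_sym (f g : H -> H) : is_adjoint ip f g -> is_adjoint ip g f.
Proof. by move=> fg x y; rewrite (ip_conj ipH) -fg -(ip_conj ipH). Qed.

Section Chain.
Variable I : eqType.
Implicit Types (G : I -> H -> H) (s : seq I).

Definition chain G s : H -> H := foldr (fun l f => G l \o f) id s.

Lemma chain_cat G s1 s2 x : chain G (s1 ++ s2) x = chain G s1 (chain G s2 x).
Proof. by elim: s1 => //= l s1 ->. Qed.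

Lemma linop_chain G s : (forall l, is_linear_op (G l)) -> is_linear_op (chain G s).
Proof. by move=> lG; elim: s => [//|l s IHs]; apply: linop_comp. Qed.

Lemma eq_in_chain G G' s x : {in s, forall l y, G l y = G' l y} ->
  chain G s x = chain G' s x.
Proof.
elim: s => [//|l s IHs] GG' /=; rewrite GG' ?mem_head // IHs // => l' ls.
by apply: GG'; rewrite inE ls orbT.
Qed.

Lemma chain_id G s x : {in s, forall l y, G l y = y} -> chain G s x = x.
Proof. by move=> G1; rewrite (@eq_in_chain _ (fun _ => id)) //; elim: s {G1}. Qed.

Lemma chain_commute G s (f : H -> H) (c : I -> R[i]) : (forall l, is_linear_op (G l)) ->
    {in s, forall l x, G l (f x) = c l *: f (G l x)} ->
  forall x, chain G s (f x) = (\prod_(l <- s) c l) *: f (chain G s x).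
Proof.
move=> lG; elim: s => [|l s IHs] Gf x /=; first by rewrite big_nil scale1r.
rewrite IHs => [|l' ls]; last by apply: Gf; rewrite inE ls orbT.
by rewrite (linopZ (lG l)) Gf ?mem_head // scalerA big_cons mulrC.
Qed.

Lemma adjoint_chain G G' s : (forall l, is_adjoint ip (G l) (G' l)) ->
  is_adjoint ip (chain G s) (chain G' (rev s)).
Proof.
move=> GG'; elim: s => [//|l s IHs] x y /=.
by rewrite GG' IHs rev_cons -cats1 chain_cat.
Qed.

End Chain.

Section Power.
Variables (A B : H -> H) (lA : is_linear_op A) (lB : is_linear_op B).

Lemma linop_opow d : is_linear_op (opow A B d).
Proof. by case: d => n; apply: linop_iter. Qed.

Lemma adjoint_opow d : is_adjoint ip A B -> is_adjoint ip (opow A B d) (opow A B (- d)).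
Proof.
case: d => [[|n]|n] AB //; first exact: adjoint_iter.
exact/adjoint_iter/adjoint_sym.
Qed.

Lemma opowNS (n : nat) x : opow A B (- n.+1%:Z) x = opow A B (- n%:Z) (B x).
Proof. by case: n => [|n] //=; rewrite -iterSr. Qed.

Lemma opow_telescope (a b : nat) x :
  opow A B (a%:Z - b%:Z) x =
  \sum_(r < (minn a b).+1)
     opow A B (- (b - r)%N%:Z) (opow A B (a - r)%N x - B (A (opow A B (a - r)%N x)))
  + opow A B (- b.+1%:Z) (opow A B a.+1 x).
Proof.
have opow0 y : opow A B 0 y = y by [].
have opowS (n : nat) y : opow A B n.+1 y = A (opow A B n y) by [].
elim: a b x => [|a IHa] [|b] x.
- by rewrite big_ord1 !subn0 subrr oppr0 !opow0 -addrA addNr addr0.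
- by rewrite big_ord1 !subn0 sub0r (linopB (linop_opow _)) !opowNS opowS !opow0 subrK.
- by rewrite big_ord1 !subn0 subr0 !opow0 opowS subrK.
rewrite minnSS big_ord_recl !subn0.
have -> : a.+1%:Z - b.+1%:Z = a%:Z - b%:Z by rewrite -[a.+1]addn1 -[b.+1]addn1 !PoszD; ring.
under eq_bigr => r _ do rewrite lift0 !subSS.
rewrite IHa (linopB (linop_opow _)) !opowNS !opowS.
by rewrite [in RHS]addrAC subrK [in RHS]addrC.
Qed.

End Power.

Section QCommutingTuple.
Variables (k : nat) (A Aadj : 'I_k -> H -> H) (q : 'I_k -> 'I_k -> R[i]).
Hypothesis linA : forall l, is_linear_op (A l).
Hypothesis linAadj : forall l, is_linear_op (Aadj l).
Hypothesis adjA : forall l, is_adjoint ip (A l) (Aadj l).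
Hypothesis q_norm1 : forall i j : 'I_k, (i < j)%N -> `|q i j| = 1.
Hypothesis q_commute : forall i j : 'I_k, (i < j)%N -> forall x : H,
  A i (A j x) = q i j *: A j (A i x) /\ A i (Aadj j x) = (q i j)^* *: Aadj j (A i x).

Local Notation T l := (opow (A l) (Aadj l)).

Lemma linT l d : is_linear_op (T l d). Proof. exact: linop_opow. Qed.

Lemma adjT l d : is_adjoint ip (T l d) (T l (- d)). Proof. exact: adjoint_opow. Qed.

Lemma ip_Al l x y : ip (A l x) y = ip x (Aadj l y). Proof. exact: (adjA l x y). Qed.

Lemma ip_Aadjl l x y : ip (Aadj l x) y = ip x (A l y).
Proof. exact: (adjoint_sym (adjA l) x y). Qed.

Section OrderedPair.
Variables (i j : 'I_k).
Hypothesis ij : (i < j)%N.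

Lemma q_neq0 : q i j != 0.
Proof. by rewrite -normr_eq0 q_norm1 // oner_eq0. Qed.

Lemma q_conj : (q i j)^* = (q i j)^-1.
Proof. by rewrite invC_norm q_norm1 // expr1n invr1 mul1r. Qed.

Lemma q_conjM : (q i j)^* * q i j = 1.
Proof. by rewrite q_conj mulVf ?q_neq0. Qed.

Lemma q_conjX (z : int) : (q i j ^ z)^* = q i j ^ (- z).
Proof.
have -> : (q i j ^ z)^* = (q i j)^* ^ z by apply: rmorphXz; rewrite unitfE q_neq0.
by rewrite q_conj exprz_inv.
Qed.

Lemma A_Aadj_commute x : A i (Aadj j x) = (q i j)^-1 *: Aadj j (A i x).
Proof. by have [_ ->] := q_commute ij x; rewrite q_conj. Qed.

Lemma Aadj_A_commute x : Aadj i (A j x) = (q i j)^-1 *: A j (Aadj i x).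
Proof.
apply: ip_injl => y; rewrite ipZl ip_Aadjl !ip_Al ip_Aadjl A_Aadj_commute ipZr.
by rewrite -q_conj conjCK mulrA q_conjM mul1r.
Qed.

Lemma Aadj_commute x : Aadj i (Aadj j x) = q i j *: Aadj j (Aadj i x).
Proof.
apply: ip_injl => y; rewrite ipZl !ip_Aadjl.
have [-> _] := q_commute ij y.
by rewrite ipZr q_conj mulrA mulfV ?mul1r ?q_neq0.
Qed.

Lemma T_commute a b x : T i a (T j b x) = q i j ^ (a * b) *: T j b (T i a x).
Proof.
case: a b => n [] m; rewrite /opow.
- by rewrite (iter_commute (linA i) (linA j) (fun y => proj1 (q_commute ij y))) -PoszM.
- rewrite (iter_commute (linA i) (linAadj j) A_Aadj_commute).
  by rewrite NegzE mulrN -PoszM -exprnN exprVn.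
- rewrite (iter_commute (linAadj i) (linA j) Aadj_A_commute).
  by rewrite NegzE mulNr -PoszM -exprnN exprVn mulnC.
- by rewrite (iter_commute (linAadj i) (linAadj j) Aadj_commute) !NegzE mulrNN -PoszM.
Qed.

Lemma T_commuteV a b x : T j b (T i a x) = q i j ^ (- (a * b)) *: T i a (T j b x).
Proof. by rewrite T_commute scalerA -expfzDr ?q_neq0 // addNr expr0z scale1r. Qed.

End OrderedPair.

Definition pre (j : nat) : seq 'I_k := take j (enum 'I_k).
Definition post (j : 'I_k) : seq 'I_k := drop j.+1 (enum 'I_k).

Lemma enum_ord_split (j : 'I_k) : enum 'I_k = pre j ++ j :: post j.
Proof.
by rewrite -[LHS](cat_take_drop j) (drop_nth j) ?size_enum_ord // nth_ord_enum.
Qed.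

Lemma pre_S (j : 'I_k) : pre j.+1 = rcons (pre j) j.
Proof. by rewrite /pre (take_nth j) ?size_enum_ord // nth_ord_enum. Qed.

Lemma pre0 : pre 0 = [::]. Proof. exact: take0. Qed.

Lemma pre_k : pre k = enum 'I_k.
Proof. by rewrite /pre take_oversize ?size_enum_ord. Qed.

Lemma mem_pre j (l : 'I_k) : (l \in pre j) = (l < j)%N.
Proof. by rewrite /pre in_take ?mem_enum ?index_enum_ord. Qed.

Lemma mem_post (j l : 'I_k) : l \in post j -> (j < l)%N.
Proof.
move=> lj; have := enum_uniq 'I_k; rewrite (enum_ord_split j) cat_uniq.
case/and3P=> _ /hasPn Npre /andP[jNpost _].
rewrite ltn_neqAle eq_sym leqNgt -mem_pre Npre ?inE ?lj ?orbT // andbT.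
by apply/negP => /eqP/val_inj le; move: lj; rewrite le (negbTE jNpost).
Qed.

Lemma big_pre (F : 'I_k -> R[i]) j :
  \prod_(l <- pre j) F l = \prod_(l < k | (l < j)%N) F l.
Proof.
by rewrite big_uniq ?take_uniq ?enum_uniq //; apply: eq_bigl => l; rewrite mem_pre.
Qed.

Definition Tpre (j : nat) (d : 'I_k -> int) : H -> H := chain (fun l => T l (d l)) (pre j).

Lemma linTpre j d : is_linear_op (Tpre j d).
Proof. by apply: linop_chain => l; apply: linT. Qed.

Lemma Tpre0 d x : Tpre 0 d x = x. Proof. by rewrite /Tpre pre0. Qed.

Lemma Tpre_S (j : 'I_k) d x : Tpre j.+1 d x = Tpre j d (T j (d j) x).
Proof. by rewrite /Tpre pre_S -cats1 chain_cat. Qed.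

Lemma eq_Tpre j d d' x : (forall l : 'I_k, (l < j)%N -> d l = d' l) ->
  Tpre j d x = Tpre j d' x.
Proof. by move=> dd'; apply: eq_in_chain => l; rewrite mem_pre => /dd' ->. Qed.

Definition cphase (j : 'I_k) (d : 'I_k -> int) (b : int) : R[i] :=
  \prod_(l < k | (l < j)%N) q l j ^ (d l * b).

Lemma Tpre_T_commute (j : 'I_k) d b x :
  Tpre j d (T j b x) = cphase j d b *: T j b (Tpre j d x).
Proof.
rewrite /Tpre (chain_commute (c := fun l => q l j ^ (d l * b)) (fun l => linT l _)).
  by rewrite big_pre.
by move=> l; rewrite mem_pre => lj y; apply: T_commute.
Qed.

Lemma cphaseD j d a b : cphase j d (a + b) = cphase j d a * cphase j d b.
Proof.
by rewrite /cphase -big_split; apply: eq_bigr => l lj; rewrite mulrDr expfzDr ?q_neq0.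
Qed.

Lemma cphase0 j d : cphase j d 0 = 1.
Proof. by rewrite /cphase big1 // => l _; rewrite mulr0 expr0z. Qed.

Lemma cphase_conj j d b : (cphase j d b)^* = cphase j d (- b).
Proof. by rewrite /cphase rmorph_prod; apply: eq_bigr => l lj; rewrite mulrN; apply: q_conjX. Qed.

Lemma cphaseB j m n b :
  cphase j m b * cphase j n (- b) = cphase j (fun l => m l - n l) b.
Proof.
by rewrite /cphase -big_split; apply: eq_bigr => l lj /=; rewrite -expfzDr ?q_neq0 // mulrN -mulrBl.
Qed.

Lemma eq_cphase (j : 'I_k) (d d' : 'I_k -> int) b : (forall l : 'I_k, (l < j)%N -> d l = d' l) ->
  cphase j d b = cphase j d' b.
Proof. by move=> dd'; apply: eq_bigr => l /dd' ->. Qed.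

Lemma ip_Tpre_T (j : 'I_k) d e w y :
  ip (Tpre j d w) (T j e y) = cphase j d e * ip (Tpre j d (T j (- e) w)) y.
Proof. by rewrite Tpre_T_commute ipZl adjT opprK mulrA -cphaseD addrN cphase0 mul1r. Qed.

(* For exponent vectors m, n with zero q-part, T((x^n)^-1 x^m) equals
   kphase k m n times Tpre k (m - n); see ip_Tdc_gmul. *)
Definition kphase (j : nat) (m n : 'I_k -> int) : R[i] :=
  \prod_(l < k | (l < j)%N) cphase l (fun i => m i - n i) (n l).

Lemma prod_ltS (F : 'I_k -> R[i]) (j : 'I_k) :
  \prod_(l < k | (l < j.+1)%N) F l = (\prod_(l < k | (l < j)%N) F l) * F j.
Proof. by rewrite -!big_pre pre_S -cats1 big_cat big_seq1. Qed.

Lemma kphase0 m n : kphase 0 m n = 1.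
Proof. by rewrite /kphase -big_pre pre0 big_nil. Qed.

Lemma kphase_S (j : 'I_k) m n :
  kphase j.+1 m n = kphase j m n * cphase j (fun l => m l - n l) (n j).
Proof. exact: prod_ltS. Qed.

Lemma eq_kphase j (m n m' n' : 'I_k -> int) :
    (forall l : 'I_k, (l < j)%N -> m l = m' l /\ n l = n' l) ->
  kphase j m n = kphase j m' n'.
Proof.
move=> mn; apply: eq_bigr => l lj; have [_ ->] := mn l lj; apply: eq_cphase => i il.
by have [-> ->] := mn i (ltn_trans il lj).
Qed.

Definition above (j : 'I_k) (u : {set 'I_k}) : Prop := forall l, l \in u -> (j < l)%N.

Lemma above_notin j u : above j u -> j \notin u.
Proof. by move=> uj; apply/negP => /uj; rewrite ltnn. Qed.

Lemma above_subset j (u v : {set 'I_k}) : v \subset u -> above j u -> above j v.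
Proof. by move=> /subsetP vu uj l /vu /uj. Qed.

Lemma AadjA_T_commute (j l : 'I_k) b x : (j < l)%N ->
  Aadj j (A j (T l b x)) = T l b (Aadj j (A j x)).
Proof.
move=> jl; change (T j (-1) (T j 1 (T l b x)) = T l b (T j (-1) (T j 1 x))).
rewrite (T_commute jl) (linopZ (linT _ _)) (T_commute jl) scalerA.
by rewrite -expfzDr ?q_neq0 // mul1r mulN1r addrN expr0z scale1r.
Qed.

Definition Te (v : {set 'I_k}) : H -> H :=
  chain (fun l => T l ((l \in v) : nat)%:Z) (enum 'I_k).

Definition Te_adj (v : {set 'I_k}) : H -> H :=
  chain (fun l => T l (- ((l \in v) : nat)%:Z)) (rev (enum 'I_k)).

Definition TeTe (v : {set 'I_k}) (x : H) : H := Te_adj v (Te v x).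

Definition defect (u : {set 'I_k}) (x : H) : H :=
  \sum_(v : {set 'I_k} | v \subset u) (-1) ^+ #|v| *: TeTe v x.

Lemma linTe v : is_linear_op (Te v). Proof. by apply: linop_chain => l; apply: linT. Qed.

Lemma linTe_adj v : is_linear_op (Te_adj v).
Proof. by apply: linop_chain => l; apply: linT. Qed.

Lemma linTeTe v : is_linear_op (TeTe v). Proof. exact: linop_comp (linTe_adj v) (linTe v). Qed.

Lemma lin_defect u : is_linear_op (defect u).
Proof.
move=> a x y; rewrite /defect scaler_sumr -big_split; apply: eq_bigr => v _ /=.
by rewrite linTeTe scalerDr !scalerA mulrC.
Qed.

Lemma ip_Te v x y : ip (Te v x) y = ip x (Te_adj v y).
Proof. by apply: adjoint_chain => l; apply: adjT. Qed.

Lemma ip_defect u x : ip (defect u x) x =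
  \sum_(v : {set 'I_k} | v \subset u) (-1) ^+ #|v| * ip (Te v x) (Te v x).
Proof.
rewrite ip_suml; apply: eq_bigr => v _.
by rewrite ipZl /TeTe (ip_conj ipH) -ip_Te -(ip_conj ipH).
Qed.

Lemma defect0 x : defect set0 x = x.
Proof.
rewrite /defect (big_pred1 set0) => [|v]; last by rewrite subset0.
by rewrite cards0 expr0 scale1r /TeTe /Te /Te_adj !chain_id // => l _ y; rewrite in_set0.
Qed.

Lemma TeTe_T_commute (j : 'I_k) (v : {set 'I_k}) (n : nat) x :
  above j v -> TeTe v (T j n x) = T j n (TeTe v x).
Proof.
move=> vj; pose e l : int := ((l \in v) : nat)%:Z.
have commute l (d : int) y : (l \notin v -> d = 0) ->
    T l d (T j n y) = q j l ^ (- (n%:Z * d)) *: T j n (T l d y).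
  case: (boolP (l \in v)) => [/vj jl _|_ /(_ isT)->]; first exact: T_commuteV.
  by rewrite mulr0 oppr0 expr0z scale1r.
have Te_c y : Te v (T j n y) =
    (\prod_(l <- enum 'I_k) q j l ^ (- (n%:Z * e l))) *: T j n (Te v y).
  by apply: (chain_commute (fun l => linT l _)) => l _ z; apply: commute => /negbTE ->.
have Te_adj_c y : Te_adj v (T j n y) =
    (\prod_(l <- rev (enum 'I_k)) q j l ^ (- (n%:Z * - e l))) *: T j n (Te_adj v y).
  by apply: (chain_commute (fun l => linT l _)) => l _ z; apply: commute => /negbTE ->.
rewrite /TeTe Te_c (linopZ (linTe_adj v)) Te_adj_c scalerA big_rev -big_split big1 ?scale1r //.
move=> l _ /=; case: (boolP (l \in v)) => [/vj jl|lv].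
  by rewrite -expfzDr ?q_neq0 // mulrN opprK addNr expr0z.
have -> : e l = 0 by rewrite /e (negbTE lv).
by rewrite oppr0 mulr0 oppr0 expr0z mulr1.
Qed.

Lemma Te_split (j : 'I_k) (v : {set 'I_k}) x : (forall l, l \in v -> (j <= l)%N) ->
  Te v x = T j ((j \in v) : nat)%:Z (chain (fun l => T l ((l \in v) : nat)%:Z) (post j) x).
Proof.
move=> vj; rewrite /Te (enum_ord_split j) chain_cat chain_id // => l.
rewrite mem_pre => lj y; suff /negbTE-> : l \notin v by [].
by apply: contraTN lj => /vj; rewrite -leqNgt.
Qed.

Lemma Te_setU1 (j : 'I_k) (w : {set 'I_k}) x : above j w ->
  Te (j |: w) x = A j (Te w x).
Proof.
move=> wj; have jNw := above_notin wj.
rewrite (@Te_split j w) => [|l /wj/ltnW //]; rewrite (negbTE jNw).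
rewrite (@Te_split j (j |: w)) => [|l /setU1P[->|/wj/ltnW] //]; rewrite setU11.
congr (A j _); apply: eq_in_chain => l /mem_post jl y.
rewrite in_setU1; suff /negbTE-> : l != j by [].
by apply: contraTneq jl => ->; rewrite ltnn.
Qed.

Lemma Te_adj_setU1 (j : 'I_k) (w : {set 'I_k}) y : above j w ->
  Te_adj (j |: w) y = Te_adj w (Aadj j y).
Proof. by move=> wj; apply: ip_injr => z; rewrite -!ip_Te Te_setU1 // ip_Al. Qed.

Lemma Te_AadjA_commute (j : 'I_k) (w : {set 'I_k}) x : above j w ->
  Te w (Aadj j (A j x)) = Aadj j (A j (Te w x)).
Proof.
move=> wj; rewrite /Te (chain_commute (f := fun y => Aadj j (A j y)) (c := fun=> 1)
  (fun l => linT l _)) => [|l _ y]; first by rewrite big1 ?scale1r.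
case: (boolP (l \in w)) => [/wj jl|_]; last by rewrite scale1r.
by rewrite scale1r AadjA_T_commute.
Qed.

Lemma Te_adj_AadjA_commute (j : 'I_k) (w : {set 'I_k}) y : above j w ->
  Te_adj w (Aadj j (A j y)) = Aadj j (A j (Te_adj w y)).
Proof.
move=> wj; apply: ip_injr => z.
by rewrite -ip_Te -ip_Al -ip_Aadjl -Te_AadjA_commute // ip_Te ip_Aadjl ip_Al.
Qed.

Lemma TeTe_setU1 (j : 'I_k) (w : {set 'I_k}) x : above j w ->
  TeTe (j |: w) x = Aadj j (A j (TeTe w x)).
Proof.
by move=> wj; rewrite /TeTe Te_setU1 // Te_adj_setU1 // Te_adj_AadjA_commute.
Qed.

Section DefectAbove.
Variables (j : 'I_k) (u : {set 'I_k}).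
Hypothesis uj : above j u.

Lemma defect_T_commute (n : nat) x : defect u (T j n x) = T j n (defect u x).
Proof.
rewrite /defect (linop_sum (linT _ _)); apply: eq_bigr => v vu.
by rewrite (linopZ (linT _ _)) (TeTe_T_commute _ _ (above_subset vu uj)).
Qed.

Lemma defect_setU1 x : defect (j |: u) x = defect u x - Aadj j (A j (defect u x)).
Proof.
have jNu := above_notin uj.
rewrite /defect sum_subsetU1 // (linop_sum (linA _)) (linop_sum (linAadj _)) -sumrN.
congr (_ + _); apply: eq_bigr => v vu.
have vj := above_subset vu uj.
rewrite TeTe_setU1 // cardsU1 (above_notin vj) exprS mulN1r scaleNr.
by rewrite (linopZ (linA _)) (linopZ (linAadj _)).
Qed.

Lemma defect_telescope (a b N : nat) z : (a <= N)%N -> (b <= N)%N ->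
  T j (a%:Z - b%:Z) (defect u z) =
  \sum_(r < N.+1 | (r <= a)%N && (r <= b)%N)
     T j (- (b - r)%N%:Z) (defect (j |: u) (T j (a - r)%N z))
  + T j (- b.+1%:Z) (defect u (T j a.+1 z)).
Proof.
move=> aN bN; rewrite (opow_telescope (linA j) (linAadj j)) defect_T_commute; congr (_ + _).
under eq_bigr => r _ do rewrite -defect_T_commute -defect_setU1.
pose F r := T j (- (b - r)%N%:Z) (defect (j |: u) (T j (a - r)%N z)).
rewrite (big_ord_widen N.+1 F) ?ltnS ?(leq_trans (geq_minl a b)) //.
by apply: eq_bigl => r; rewrite ltnS leq_min.
Qed.

End DefectAbove.

Definition kentry (j : nat) (X : H -> H) (m n : 'I_k -> int) (x y : H) : R[i] :=
  kphase j m n * ip (Tpre j (fun l => m l - n l) (X x)) y.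

Definition kernel_form (j : nat) (X : H -> H) (I : eqType) (S : seq I)
    (m : I -> 'I_k -> int) (g : I -> H) : R[i] :=
  \sum_(s <- S) \sum_(t <- S) kentry j X (m s) (m t) (g s) (g t).

(* Level j: exponents in the coordinates < j, a defect S(u) of coordinates >= j. *)
Definition kernel_pos (j : nat) : Prop :=
  forall u : {set 'I_k}, (forall l, l \in u -> (j <= l)%N) ->
  forall (I : eqType) (S : seq I) (m : I -> 'I_k -> int) (g : I -> H),
    0 <= kernel_form j (defect u) S m g.

Lemma kentry0l j X m n y : is_linear_op X -> kentry j X m n 0 y = 0.
Proof. by move=> lX; rewrite /kentry !linop0 ?ip0l ?mulr0 //; apply: linTpre. Qed.

Lemma kentry0r j X m n x : kentry j X m n x 0 = 0.
Proof. by rewrite /kentry ip0r mulr0. Qed.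

Section SuccStep.
Variables (j : 'I_k) (u : {set 'I_k}).
Hypothesis uj : above j u.

Lemma kphase_S_shift (m n : 'I_k -> int) (p : int) (e : nat) w y : p + e%:Z = n j ->
  kphase j.+1 m n * ip (Tpre j (fun l => m l - n l) (T j (- e%:Z) w)) y =
  kphase j m n * ip (Tpre j (fun l => m l - n l) (cphase j m p *: w)) (cphase j n p *: T j e y).
Proof.
move=> pe; have E : cphase j m p * cphase j n (- p) * cphase j (fun l => m l - n l) e =
    cphase j (fun l => m l - n l) (n j) by rewrite cphaseB -cphaseD pe.
by rewrite kphase_S (linopZ (linTpre _ _)) ipZl ipZr ip_Tpre_T cphase_conj -E !mulrA.
Qed.

(* The vectors along which defect_telescope splits an entry of level j+1;
   P is a common lower bound for the j-th exponents. *)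
Definition succ_vec (P : int) (r : nat) (m : 'I_k -> int) (z : H) : H :=
  if (r <= `|m j - P|)%N then cphase j m (P + r%:Z) *: T j (`|m j - P| - r)%N z else 0.

Definition succ_tail (P : int) (m : 'I_k -> int) (z : H) : H :=
  cphase j m (P - 1) *: T j `|m j - P|.+1 z.

Lemma kentry_S (P : int) (N : nat) (m n : 'I_k -> int) z y :
    P <= m j -> P <= n j -> (`|m j - P| <= N)%N -> (`|n j - P| <= N)%N ->
  kentry j.+1 (defect u) m n z y =
  \sum_(r < N.+1) kentry j (defect (j |: u)) m n (succ_vec P r m z) (succ_vec P r n y)
  + kentry j (defect u) m n (succ_tail P m z) (succ_tail P n y).
Proof.
move=> Pm Pn mN nN.
have shift (x : int) : P <= x -> x = P + `|x - P|%N%:Z.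
  by move=> Px; rewrite abszE ger0_norm ?subr_ge0 // addrCA subrr addr0.
have Ea := shift _ Pm; have Eb := shift _ Pn.
rewrite /succ_vec /succ_tail; set a := `|m j - P|%N in Ea mN *; set b := `|n j - P|%N in Eb nN *.
rewrite {1}/kentry Tpre_S /= (_ : m j - n j = a%:Z - b%:Z); last by rewrite Ea Eb; ring.
rewrite (defect_telescope uj _ mN nN) (linopD (linTpre _ _)) ipDl mulrDr.
rewrite (linop_sum (linTpre _ _)) ip_suml mulr_sumr; congr (_ + _); last first.
  rewrite /kentry (linopZ (lin_defect _)); apply: kphase_S_shift.
  by rewrite Eb; ring.
rewrite [RHS](bigID (fun r : 'I_N.+1 => (r <= a)%N && (r <= b)%N)) /=.
rewrite [X in _ = _ + X]big1 ?addr0 => [|r]; last first.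
  by rewrite negb_and => /orP[] /negbTE->; [apply/kentry0l/lin_defect | apply: kentry0r].
apply: eq_bigr => r /andP[ra rb]; rewrite /kentry ra rb (linopZ (lin_defect _)).
by apply: kphase_S_shift; rewrite Eb -addrA -PoszD subnKC.
Qed.

Lemma kernel_form_S (P : int) (N : nat) (I : eqType) (S : seq I) (m : I -> 'I_k -> int) g :
    (forall s, s \in S -> P <= m s j /\ (`|m s j - P| <= N)%N) ->
  kernel_form j.+1 (defect u) S m g =
  \sum_(r < N.+1) kernel_form j (defect (j |: u)) S m (fun s => succ_vec P r (m s) (g s))
  + kernel_form j (defect u) S m (fun s => succ_tail P (m s) (g s)).
Proof.
move=> bnd; rewrite /kernel_form; transitivity (\sum_(s <- S) \sum_(t <- S)
  (\sum_(r < N.+1) kentry j (defect (j |: u)) (m s) (m t)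
     (succ_vec P r (m s) (g s)) (succ_vec P r (m t) (g t))
   + kentry j (defect u) (m s) (m t) (succ_tail P (m s) (g s)) (succ_tail P (m t) (g t)))).
  rewrite !big_seq; apply: eq_bigr => s sS; rewrite !big_seq; apply: eq_bigr => t tS.
  by have [Pm mN] := bnd s sS; have [Pn nN] := bnd t tS; apply: kentry_S.
under eq_bigr => s _ do rewrite big_split /=.
rewrite big_split /= [in RHS]exchange_big; congr (_ + _); apply: eq_bigr => s _.
by rewrite [RHS]exchange_big.
Qed.

End SuccStep.

Lemma kernel_pos_S (j : 'I_k) : kernel_pos j -> kernel_pos j.+1.
Proof.
move=> Kj u uj I S m g; pose M := (\sum_(s <- S) `|m s j|)%N.
rewrite (@kernel_form_S j u uj (- M%:Z) (M + M)) => [|s sS].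
  apply: addr_ge0; first apply: sumr_ge0 => r _; apply: Kj => l.
    by case/setU1P=> [->|/uj/ltnW].
  by move/uj/ltnW.
have : (`|m s j| <= M)%N by rewrite /M (big_rem s sS) leq_addr.
by split; lia.
Qed.

Section PredStep.
Variable j : 'I_k.

Definition with_coord (m : 'I_k -> int) (e : bool) : 'I_k -> int :=
  fun l => if l == j then (e : nat)%:Z else m l.

Lemma with_coord_lt m e (l : 'I_k) : (l < j)%N -> with_coord m e l = m l.
Proof. by rewrite /with_coord; case: eqP => // ->; rewrite ltnn. Qed.

Lemma with_coord_eq m e : with_coord m e j = (e : nat)%:Z.
Proof. by rewrite /with_coord eqxx. Qed.

Lemma kentry_with_coord X (m n : 'I_k -> int) (e e' : bool) x y :
  kentry j.+1 X (with_coord m e) (with_coord n e') x y =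
  kphase j m n * cphase j (fun l => m l - n l) (e' : nat)%:Z *
    ip (Tpre j (fun l => m l - n l) (T j ((e : nat)%:Z - (e' : nat)%:Z) (X x))) y.
Proof.
rewrite /kentry kphase_S Tpre_S !with_coord_eq.
rewrite (@eq_kphase j _ _ m n) => [|l lj]; last by rewrite !with_coord_lt.
rewrite (@eq_cphase j _ (fun l => m l - n l)) => [|l lj]; last by rewrite !with_coord_lt.
by rewrite (@eq_Tpre j _ (fun l => m l - n l)) // => l lj; rewrite !with_coord_lt.
Qed.

(* Exponents 0 and 1 in coordinate j, tested on these vectors, bring out the
   factor I - A_j^* A_j of S(j |: u). *)
Definition pred_vec (m : 'I_k -> int) (z : H) (e : bool) : H :=
  if e then (cphase j m 1)^* *: z else - ((cphase j m 1)^* *: A j z).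

Lemma kentry_pred (u : {set 'I_k}) (m n : 'I_k -> int) z y :
    above j u ->
  \sum_(e <- [:: true; false]) \sum_(e' <- [:: true; false])
     kentry j.+1 (defect u) (with_coord m e) (with_coord n e') (pred_vec m z e) (pred_vec n y e')
  = kentry j (defect (j |: u)) m n z y.
Proof.
move=> uj; rewrite !big_cons !big_nil !addr0 !kentry_with_coord /pred_vec.
rewrite (_ : (true : nat)%:Z = 1) // (_ : (false : nat)%:Z = 0) // !subrr subr0 sub0r cphase0.
set d := fun l => m l - n l; set F := cphase j m 1; set G := cphase j n 1.
set D := defect u z.
have phase1 : cphase j d 1 * F^* * G = 1.
  rewrite -cphaseB /F /G !cphase_conj; transitivity (cphase j m (1 + -1) * cphase j n (-1 + 1)).
    by rewrite !cphaseD; ring.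
  by rewrite addrN addNr !cphase0 mulr1.
have lD := lin_defect u; have lW := linTpre j d.
have T0 w : T j 0 w = w by [].
have T1 w : A j w = T j 1 w by [].
have TAA w : T j (-1) (T j 1 w) = Aadj j (A j w) by [].
have e11 : ip (Tpre j d (T j 0 (defect u (F^* *: z)))) (G^* *: y) = F^* * G * ip (Tpre j d D) y.
  by rewrite T0 (linopZ lD) (linopZ lW) ipZl ipZr conjCK mulrA.
have e10 : ip (Tpre j d (T j 1 (defect u (F^* *: z)))) (- (G^* *: A j y)) =
    - (F^* * G * cphase j d 1 * ip (Tpre j d (Aadj j (A j D))) y).
  rewrite (linopZ lD) (linopZ (linT _ _)) (linopZ lW) ipNr ipZl ipZr conjCK.
  by rewrite [A j y]T1 ip_Tpre_T TAA; ring.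
have e01 : ip (Tpre j d (T j (-1) (defect u (- (F^* *: A j z))))) (G^* *: y) =
    - (F^* * G * ip (Tpre j d (Aadj j (A j D))) y).
  rewrite (linopN lD) (linopZ lD) [A j z]T1 defect_T_commute //.
  rewrite (linopN (linT _ _)) (linopZ (linT _ _)) (linopN lW) (linopZ lW) ipNl ipZl ipZr.
  by rewrite conjCK TAA; ring.
have e00 : ip (Tpre j d (T j 0 (defect u (- (F^* *: A j z))))) (- (G^* *: A j y)) =
    F^* * G * cphase j d 1 * ip (Tpre j d (Aadj j (A j D))) y.
  rewrite T0 (linopN lD) (linopZ lD) [A j z]T1 defect_T_commute //.
  rewrite (linopN lW) (linopZ lW) ipNl ipNr ipZl ipZr conjCK [A j y]T1 ip_Tpre_T TAA.
  by ring.
rewrite e11 e10 e01 e00 /kentry defect_setU1 // -/D (linopB lW) ipBl.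
transitivity (kphase j m n * (cphase j d 1 * F^* * G) *
  (ip (Tpre j d D) y - ip (Tpre j d (Aadj j (A j D))) y)); first by ring.
by rewrite phase1 mulr1.
Qed.

End PredStep.

Lemma kernel_pos_pred (j : 'I_k) : kernel_pos j.+1 -> kernel_pos j.
Proof.
move=> Kj u uj I S m g; case: (boolP (j \in u)) => ju.
  have u'j : above j (u :\ j).
    by move=> l /setD1P[lj /uj jl]; rewrite ltn_neqAle jl andbT eq_sym.
  pose S' := [seq (s, e) | s <- S, e <- [:: true; false]].
  rewrite -(setD1K ju); have -> : kernel_form j (defect (j |: u :\ j)) S m g =
      kernel_form j.+1 (defect (u :\ j)) S' (fun x => with_coord j (m x.1) x.2)
        (fun x => pred_vec j (m x.1) (g x.1) x.2).
    rewrite /kernel_form /S' big_allpairs.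
    under [RHS]eq_bigr => s _ do under eq_bigr => e _ do rewrite big_allpairs.
    under [RHS]eq_bigr => s _ do rewrite exchange_big.
    by apply: eq_bigr => s _; apply: eq_bigr => t _; rewrite -kentry_pred.
  exact: Kj.
have uj' : above j u.
  by move=> l lu; rewrite ltn_neqAle uj // andbT; apply: contraNneq ju => /val_inj ->.
have -> : kernel_form j (defect u) S m g =
    kernel_form j.+1 (defect u) S (fun s => with_coord j (m s) false) g.
  rewrite /kernel_form; apply: eq_bigr => s _; apply: eq_bigr => t _.
  by rewrite kentry_with_coord (_ : (false : nat)%:Z = 0) // subrr cphase0 mulr1.
exact: Kj.
Qed.

Lemma prod_ltpair (F : 'I_k -> 'I_k -> R[i]) :
  \prod_(l < k | (l < k)%N) \prod_(i < k | (i < l)%N) F i l =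
  \prod_(p : ltpair k) F (sval p).1 (sval p).2.
Proof.
rewrite (exchange_big_dep xpredT) //= pair_big_dep /=.
rewrite (reindex_omap (fun p : ltpair k => sval p) insub) => [|[i l] /andP[_ il]]; last first.
  by rewrite insubT.
by apply: eq_bigl => p; rewrite /= (valP p) ltn_ord valK eqxx.
Qed.

Definition qcoef (g : Gdc k) : R[i] := \prod_(p : ltpair k) q (sval p).1 (sval p).2 ^ g.1 p.

Lemma Tdc_Tpre g x : Tdc q A Aadj g x = qcoef g *: Tpre k (fun l => g.2 l) x.
Proof. by rewrite /Tdc /Tpre pre_k. Qed.

Lemma Tdc_xe v x : Tdc q A Aadj (xe v) x = Te v x.
Proof.
rewrite Tdc_Tpre /qcoef big1 ?scale1r => [|p _]; last by rewrite ffunE expr0z.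
by rewrite /Tpre pre_k; apply: eq_in_chain => l _ y; rewrite ffunE.
Qed.

Lemma qcoef_conj g : (qcoef g)^* = \prod_(p : ltpair k) q (sval p).1 (sval p).2 ^ (- g.1 p).
Proof. by rewrite rmorph_prod; apply: eq_bigr => p _; apply/q_conjX/(valP p). Qed.

Lemma qcoef_pure n : qcoef ([ffun=> 0], n) = 1.
Proof. by rewrite /qcoef big1 // => p _; rewrite ffunE expr0z. Qed.

Lemma ip_Tdc_gmul (g h : Gdc k) x y :
  ip (Tdc q A Aadj (gmul (ginv h) g) x) y =
  kentry k id (fun l => g.2 l) (fun l => h.2 l) (qcoef g *: x) (qcoef h *: y).
Proof.
rewrite /kentry Tdc_Tpre ipZl (linopZ (linTpre _ _)) ipZl ipZr !mulrA.
congr (_ * ip _ _); last first.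
  by apply: eq_Tpre => l _; rewrite !ffunE addrC.
rewrite /kphase prod_ltpair qcoef_conj /qcoef -!big_split; apply: eq_bigr => p _ /=.
by rewrite !ffunE -!expfzDr ?q_neq0 ?(valP p) //; congr (_ ^ _); ring.
Qed.

Lemma Tpre_adjoint j m : (j <= k)%N -> forall x y,
  ip (Tpre j m x) y =
  \prod_(l < k | (l < j)%N) cphase l (fun i => - m i) (- m l) *
    ip x (Tpre j (fun l => - m l) y).
Proof.
elim: j => [|j IHj] jk x y; first by rewrite !Tpre0 -big_pre pre0 big_nil mul1r.
pose jo := Ordinal jk; rewrite -[j.+1]/(jo.+1 : nat) prod_ltS.
have E : T jo (- m jo) (Tpre jo (fun l => - m l) y) =
    cphase jo (fun l => - m l) (m jo) *: Tpre jo.+1 (fun l => - m l) y.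
  by rewrite Tpre_S Tpre_T_commute scalerA -cphaseD addrN cphase0 scale1r.
by rewrite Tpre_S (IHj (ltnW jk)) adjT E ipZr cphase_conj mulrA.
Qed.

Lemma Tdc_adjoint g : is_adjoint ip (Tdc q A Aadj g) (Tdc q A Aadj (ginv g)).
Proof.
move=> x y; rewrite !Tdc_Tpre ipZl ipZr (Tpre_adjoint _ (leqnn k)) !mulrA.
rewrite (@eq_Tpre k _ (fun l => (ginv g).2 l)) => [|l _]; last by rewrite ffunE.
congr (_ * _); rewrite /cphase (prod_ltpair (fun i l => q i l ^ (- g.2 i * - g.2 l))).
rewrite qcoef_conj /qcoef -big_split; apply: eq_bigr => p _ /=.
by rewrite !ffunE -expfzDr ?q_neq0 ?(valP p) //; congr (_ ^ _); ring.
Qed.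

Lemma kernel_pos_k_posdef : kernel_pos k -> posdef_Gdc ip (Tdc q A Aadj).
Proof.
move=> Kk; split=> [|S h _]; first exact: Tdc_adjoint.
have set0k l : l \in (set0 : {set 'I_k}) -> (k <= l)%N by rewrite in_set0.
have := Kk set0 set0k _ S (fun s l => s.2 l) (fun s => qcoef s *: h s).
congr (0 <= _); apply: eq_bigr => s _; apply: eq_bigr => t _.
by rewrite ip_Tdc_gmul /kentry defect0.
Qed.

Lemma posdef_kernel_pos_k : posdef_Gdc ip (Tdc q A Aadj) -> kernel_pos k.
Proof.
move=> [_ posT] u uk I S m g.
have -> : u = set0.
  by apply/setP => l; rewrite in_set0; apply/negP => /uk; rewrite leqNgt ltn_ord.
pose fm s : {ffun 'I_k -> int} := finfun (m s).
pose S0 := [seq ([ffun=> 0], n) : Gdc k | n <- undup [seq fm s | s <- S]].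
pose h (x : Gdc k) : H := \sum_(s <- S | fm s == x.2) g s.
have uS0 : uniq S0 by rewrite map_inj_uniq ?undup_uniq // => n1 n2 [].
have entry a b : ip (Tdc q A Aadj (gmul (ginv ([ffun=> 0], b)) ([ffun=> 0], a)) (h ([ffun=> 0], a)))
    (h ([ffun=> 0], b)) = \sum_(s <- S | fm s == a) \sum_(t <- S | fm t == b)
    kentry k (defect set0) (m s) (m t) (g s) (g t).
  rewrite ip_Tdc_gmul !qcoef_pure !scale1r /kentry /h (linop_sum (linTpre _ _)) ip_suml.
  rewrite mulr_sumr; apply: eq_bigr => s /eqP <-; rewrite ip_sumr mulr_sumr.
  apply: eq_bigr => t /eqP <-; rewrite defect0; congr (_ * ip _ _).
    by apply: eq_kphase => l _; rewrite !ffunE.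
  by apply: eq_Tpre => l _; rewrite !ffunE.
have := posT S0 h uS0; congr (0 <= _).
rewrite /S0 big_map; under eq_bigr => a _ do rewrite big_map.
under eq_bigr => a _ do under eq_bigr => b _ do rewrite entry.
under eq_bigr => a _ do rewrite exchange_big.
under eq_bigr => a _ do under eq_bigr => s _ do rewrite sum_fibers.
by rewrite sum_fibers.
Qed.

Lemma kernel_pos0_Brehmer : kernel_pos 0 <->
  forall (u : {set 'I_k}) (x : H), 0 <= \sum_(v : {set 'I_k} | v \subset u)
    (-1) ^+ #|v| * ip (Tdc q A Aadj (xe v) x) (Tdc q A Aadj (xe v) x).
Proof.
split=> [K0 u x|brehmer u _ I S m g].
  have := K0 u (fun l _ => leq0n l) _ [:: tt] (fun _ _ => 0) (fun _ => x).
  rewrite /kernel_form !big_seq1 /kentry kphase0 Tpre0 mul1r ip_defect.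
  by under eq_bigr => v _ do rewrite -!Tdc_xe.
have -> : kernel_form 0 (defect u) S m g = ip (defect u (\sum_(s <- S) g s)) (\sum_(s <- S) g s).
  rewrite (linop_sum (lin_defect u)) ip_suml; apply: eq_bigr => s _.
  by rewrite ip_sumr; apply: eq_bigr => t _; rewrite /kentry kphase0 Tpre0 mul1r.
by rewrite ip_defect; under eq_bigr => v _ do rewrite -!Tdc_xe.
Qed.

Lemma kernel_pos0E j : (j <= k)%N -> kernel_pos 0 <-> kernel_pos j.
Proof.
elim: j => [//|j IHj] jk; apply: iff_trans (IHj (ltnW jk)) _.
by split; [apply: (@kernel_pos_S (Ordinal jk)) | apply: (@kernel_pos_pred (Ordinal jk))].
Qed.

Lemma posdef_Gdc_iff_Brehmer : posdef_Gdc ip (Tdc q A Aadj) <->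
  forall (u : {set 'I_k}) (x : H), 0 <= \sum_(v : {set 'I_k} | v \subset u)
    (-1) ^+ #|v| * ip (Tdc q A Aadj (xe v) x) (Tdc q A Aadj (xe v) x).
Proof.
apply: iff_trans kernel_pos0_Brehmer; apply: iff_trans (iff_sym (kernel_pos0E (leqnn k))).
by split; [apply: posdef_kernel_pos_k | apply: kernel_pos_k_posdef].
Qed.

End QCommutingTuple.
End InnerProductSpace.

Unset Implicit Arguments.

Theorem theorem3p2 (R : realType) (H : lmodType R[i]) (ip : H -> H -> R[i])
  (k : nat) (A Aadj : 'I_k -> H -> H) (q : 'I_k -> 'I_k -> R[i]) :
  is_hilbert ip ->
  (forall l, is_linear_op (A l)) ->
  (forall l, is_linear_op (Aadj l)) ->
  (forall l, is_adjoint ip (A l) (Aadj l)) ->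
  (forall l, is_contraction ip (A l)) ->
  (forall i j : 'I_k, (i < j)%N -> `|q i j| = 1) ->
  (forall i j : 'I_k, (i < j)%N -> forall x : H,
      A i (A j x) = q i j *: A j (A i x) /\
      A i (Aadj j x) = (q i j)^* *: Aadj j (A i x)) ->
  (posdef_Gdc ip (Tdc q A Aadj) <->
   forall u : {set 'I_k}, forall x : H,
     0 <= \sum_(v : {set 'I_k} | v \subset u)
            (-1) ^+ #|v| * ip (Tdc q A Aadj (xe v) x) (Tdc q A Aadj (xe v) x)).
Proof.
move=> ipH linA linAadj adjA _ q_norm1 q_commute.
exact (posdef_Gdc_iff_Brehmer ipH linA linAadj adjA q_norm1 q_commute).
Qed.
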